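(* Assume $\gamma\neq\pm2$ and let $z_\pm=\frac12\big(-\gamma\pm\sqrt{\gamma^2-4}\big)$ be the fixed points of $\sigma$ (so $z_+z_-=1$). Define the Ragnisco–Bruschi Lax matrices $L^{\rho_\pm}=T+z_\pm S$ (so that $L^{\rho_\pm}=z_\pm\mathcal L(z_\mp)$). With respect to the quadratic bracket $\{\cdot,\cdot\}_{(2)}$ below, for all $i,j,k,l$, $$\{L^{\rho_+}_{ij},L^{\rho_-}_{kl}\}_{(2)}=-\frac{\nu}{4}\Big(\mathfrak s_{ik}L^{\rho_+}_{kj}L^{\rho_-}_{il}+\mathfrak s_{jl}L^{\rho_-}_{kj}L^{\rho_+}_{il}+\mathfrak s_{jk}L^{\rho_+}_{ik}L^{\rho_-}_{jl}+\mathfrak s_{il}L^{\rho_-}_{ki}L^{\rho_+}_{lj}\Big).$$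
   Context: Fix $N\ge2$, $\nu\neq0$. Variables $p_1,\dots,p_N>0$, $q_1,\dots,q_N$ pairwise distinct with fixed ordering; $q_{ij}=q_i-q_j$, $\mathfrak s_{ij}=\mathrm{sgn}(q_i-q_j)$, $\mathfrak s_{ii}=0$. $\sigma(z)=z^\sigma=-\frac{\frac{\gamma}{2}z+1}{z+\frac{\gamma}{2}}$. $T=\sum_{i,j}\sqrt{p_ip_j}\cosh\frac{\nu}{2}(q_i-q_j)E_{ij}$, $A=\sum_{i,j}\sqrt{p_ip_j}\sinh\frac{\nu}{2}(q_i-q_j)E_{ij}$, $S=\sum_{i,j}\sqrt{p_ip_j}\,\mathfrak s_{ij}\sinh\frac{\nu}{2}(q_i-q_j)E_{ij}$, and $\mathcal L(z)=\frac{z+z^\sigma}{2}T+S+\frac{z-z^\sigma}{2}A$. With $\mathcal Q_{ik}=(\gamma-2)e^{\nu|q_{ik}|}-(\gamma+2)e^{-\nu|q_{ik}|}+4$ and $\mathcal S_{ik}=(\gamma-2)e^{\nu|q_{ik}|}+(\gamma+2)e^{-\nu|q_{ik}|}$, the bracket $\{\cdot,\cdot\}_{(2)}$ on functions of $p_i,q_{ij}$ is: $\{p_i,p_k\}_{(2)}=\frac{\nu}{4}\mathfrak s_{ik}p_ip_k(\mathcal Q_{ik}-4)$, $\{q_{ij},p_k\}_{(2)}=-\frac14p_k(\mathcal S_{ik}-\mathcal S_{jk})$, $\{q_{ij},q_{kl}\}_{(2)}=-\frac{1}{4\nu}(\mathfrak s_{ik}\mathcal Q_{ik}-\mathfrak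 s_{jk}\mathcal Q_{jk}-\mathfrak s_{il}\mathcal Q_{il}+\mathfrak s_{jl}\mathcal Q_{jl})$. *)

From Stdlib Require Import Reals.
From Coquelicot Require Import Coquelicot.
Open Scope R_scope.

Definition sgn (x : R) : R :=
  if Rlt_dec 0 x then 1 else if Rlt_dec x 0 then -1 else 0.

(* phase-space point: p q : nat -> R, only indices < N matter *)
Definition sg (q : nat -> R) (i j : nat) : R := sgn (q i - q j).

Definition QQ (gamma nu : R) (q : nat -> R) (i k : nat) : R :=
  (gamma - 2) * exp (nu * Rabs (q i - q k)) - (gamma + 2) * exp (- nu * Rabs (q i - q k)) + 4.
Definition SS (gamma nu : R) (q : nat -> R) (i k : nat) : R :=
  (gamma - 2) * exp (nu * Rabs (q i - q k)) + (gamma + 2) * exp (- nu * Rabs (q i - q k)).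

(* Lifted structure functions of the quadratic bracket {.,.}_(2):
   {p_a,p_b} , {q_a,p_b} , {q_a,q_b}.  On functions of p_i and q_ij = q_i - q_j
   these reproduce exactly the brackets of the paper. *)
Definition Bpp gamma nu (p q : nat -> R) (a b : nat) : R :=
  nu / 4 * sg q a b * p a * p b * (QQ gamma nu q a b - 4).
Definition Bqp gamma nu (p q : nat -> R) (a b : nat) : R :=
  - / 4 * p b * SS gamma nu q a b.
Definition Bqq gamma nu (q : nat -> R) (a b : nat) : R :=
  - / (4 * nu) * (sg q a b * QQ gamma nu q a b).

Definition upd (x : nat -> R) (a : nat) (t : R) : nat -> R :=
  fun i => if Nat.eq_dec i a then t else x i.

Definition DeriveC (f : R -> C) (x : R) : C :=
  (Derive (fun t => Re (f t)) x, Derive (fun t => Im (f t)) x).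

Definition dP (F : (nat -> R) -> (nat -> R) -> C) (a : nat) (p q : nat -> R) : C :=
  DeriveC (fun t => F (upd p a t) q) (p a).
Definition dQ (F : (nat -> R) -> (nat -> R) -> C) (a : nat) (p q : nat -> R) : C :=
  DeriveC (fun t => F p (upd q a t)) (q a).

Fixpoint sumC (n : nat) (f : nat -> C) : C :=
  match n with O => RtoC 0 | S m => Cplus (sumC m f) (f m) end.

Definition PB2 (N : nat) (gamma nu : R) (F G : (nat -> R) -> (nat -> R) -> C)
  (p q : nat -> R) : C :=
  sumC N (fun a => sumC N (fun b =>
    Cplus (Cplus (Cmult (Cmult (dP F a p q) (dP G b p q)) (RtoC (Bpp gamma nu p q a b)))
                 (Cmult (Cmult (dQ F a p q) (dP G b p q)) (RtoC (Bqp gamma nu p q a b))))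
          (Cplus (Cmult (Cmult (dP F a p q) (dQ G b p q)) (RtoC (- Bqp gamma nu p q b a)))
                 (Cmult (Cmult (dQ F a p q) (dQ G b p q)) (RtoC (Bqq gamma nu q a b)))))).

Definition Tm (nu : R) (p q : nat -> R) (i j : nat) : R :=
  sqrt (p i * p j) * cosh (nu / 2 * (q i - q j)).
Definition Sm (nu : R) (p q : nat -> R) (i j : nat) : R :=
  sqrt (p i * p j) * sg q i j * sinh (nu / 2 * (q i - q j)).

Definition Lrho (nu : R) (z : C) (i j : nat) (p q : nat -> R) : C :=
  Cplus (RtoC (Tm nu p q i j)) (Cmult z (RtoC (Sm nu p q i j))).

Definition csqrtR (d : R) : C :=
  if Rle_dec 0 d then (sqrt d, 0) else (0, sqrt (- d)).

Definition zplus (gamma : R) : C :=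
  Cmult (RtoC (/2)) (Cplus (RtoC (- gamma)) (csqrtR (gamma ^ 2 - 4))).
Definition zminus (gamma : R) : C :=
  Cmult (RtoC (/2)) (Cminus (RtoC (- gamma)) (csqrtR (gamma ^ 2 - 4))).

(* Each of [L^rho+_ij] and [L^rho-_kl] depends on the phase space only through two
   points, and its partial derivatives are again multiples of [L^rho] (along [p_a]) or of
   its [q]-derivative (along [q_a]); so the double sum defining the bracket collapses to
   four cross terms.  Writing [z_- = 1/z_+], [gamma = -(z_+ + z_-)], [x_a = exp (nu q_a / 2)]
   and [exp (+-nu |q_a - q_b|) = ((1 +- s_ab) x_a^2/x_b^2 + (1 -+ s_ab) x_b^2/x_a^2) / 2],
   the claim becomes, for each relative order of [q_i, q_j, q_k, q_l], an identity of
   rational functions in [z_+], [x_a] and [sqrt p_a]. *)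

From Stdlib Require Import Reals Lra Lia List.
From Coquelicot Require Import Coquelicot.
Import ListNotations.
Open Scope R_scope.

Definition kdelta (a i : nat) : R := if Nat.eq_dec a i then 1 else 0.

Lemma sgn_sign x : sgn x = sign x.
Proof.
  unfold sgn. destruct (Rlt_dec 0 x) as [Hx|Hx].
  - now rewrite sign_eq_1.
  - destruct (Rlt_dec x 0) as [Hx'|Hx'].
    + now rewrite sign_eq_m1.
    + replace x with 0 by lra. now rewrite sign_0.
Qed.

Lemma sg_lt (q : nat -> R) a b : q a < q b -> sg q a b = -1.
Proof. intros H. unfold sg. rewrite sgn_sign. apply sign_eq_m1. lra. Qed.

Lemma sg_gt (q : nat -> R) a b : q b < q a -> sg q a b = 1.
Proof. intros H. unfold sg. rewrite sgn_sign. apply sign_eq_1. lra. Qed.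

Lemma sg_eq (q : nat -> R) a b : q a = q b -> sg q a b = 0.
Proof. intros H. unfold sg. now rewrite sgn_sign, H, Rminus_diag, sign_0. Qed.

Lemma sign_mul_sinh c x : sign x * sinh (c * x) = sinh (c * Rabs x).
Proof.
  destruct (Rtotal_order x 0) as [H|[H|H]].
  - rewrite sign_eq_m1, Rabs_left by lra.
    rewrite <- Ropp_mult_distr_r. unfold sinh. rewrite Ropp_involutive. field.
  - subst. rewrite sign_0, Rabs_R0, Rmult_0_r. unfold sinh. rewrite Ropp_0. field.
  - rewrite sign_eq_1, Rabs_right by lra. ring.
Qed.

Lemma sign_mul_cosh c x : sign x * cosh (c * Rabs x) = sign x * cosh (c * x).
Proof.
  destruct (Rtotal_order x 0) as [H|[H|H]].
  - rewrite Rabs_left by lra.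
    rewrite <- Ropp_mult_distr_r. unfold cosh. rewrite Ropp_involutive. f_equal. field.
  - subst. now rewrite sign_0, !Rmult_0_l.
  - now rewrite Rabs_right by lra.
Qed.

(* [sign y * sinh (c y) = sinh (c |y|)], which is smooth away from [0]. *)
Lemma is_derive_sign_sinh c x : x <> 0 ->
  is_derive (fun y => sign y * sinh (c * y)) x (c * sign x * cosh (c * x)).
Proof.
  intros Hx.
  apply (is_derive_ext (fun y => sinh (c * Rabs y))).
  { intros y. now rewrite sign_mul_sinh. }
  auto_derive; [exact Hx|].
  rewrite Rmult_1_l, Rmult_assoc, sign_mul_cosh. ring.
Qed.

Lemma upd_at (x : nat -> R) a b : upd x a (x a) b = x b.
Proof. unfold upd. destruct (Nat.eq_dec b a); now subst. Qed.

Lemma is_derive_upd_sub (q : nat -> R) a i j :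
  is_derive (fun t => upd q a t i - upd q a t j) (q a) (kdelta a i - kdelta a j).
Proof.
  unfold upd, kdelta.
  destruct (Nat.eq_dec i a), (Nat.eq_dec j a), (Nat.eq_dec a i), (Nat.eq_dec a j);
    try congruence; auto_derive; auto; ring.
Qed.

Lemma is_derive_sqrt_upd_mul (p : nat -> R) a i j : 0 < p i -> 0 < p j ->
  is_derive (fun t => sqrt (upd p a t i * upd p a t j)) (p a)
    ((kdelta a i * / (2 * p i) + kdelta a j * / (2 * p j)) * sqrt (p i * p j)).
Proof.
  intros Hi Hj. unfold upd, kdelta.
  destruct (Nat.eq_dec i a), (Nat.eq_dec j a), (Nat.eq_dec a i), (Nat.eq_dec a j);
    try congruence; subst; auto_derive; auto; try nra.
  all: match goal with |- context [sqrt ?y] =>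
         assert (Hy : 0 < y) by nra;
         pose proof (sqrt_sqrt y (Rlt_le _ _ Hy)) as Hs;
         pose proof (sqrt_lt_R0 y Hy); set (s := sqrt y) in *; clearbody s
       end.
  all: field_simplify_eq; [replace (s ^ 2) with (s * s) by ring; rewrite Hs; ring | repeat split; lra].
Qed.

Lemma DeriveC_affine (z : C) (f g : R -> R) x df dg :
  is_derive f x df -> is_derive g x dg ->
  DeriveC (fun t => Cplus (RtoC (f t)) (Cmult z (RtoC (g t)))) x
  = Cplus (RtoC df) (Cmult z (RtoC dg)).
Proof.
  intros Hf Hg. destruct z as [zr zi]. unfold DeriveC.
  apply injective_projections; simpl.
  - replace (df + (zr * dg - zi * 0)) with (df + zr * dg) by ring.
    apply is_derive_unique.
    apply (is_derive_ext (fun t => f t + zr * g t)); [intros t; simpl; ring|].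
    apply (is_derive_plus f (fun t => zr * g t)); [exact Hf | now apply is_derive_scal].
  - replace (0 + (zr * 0 + zi * dg)) with (zi * dg) by ring.
    apply is_derive_unique.
    apply (is_derive_ext (fun t => zi * g t)); [intros t; simpl; ring|].
    now apply is_derive_scal.
Qed.

Definition Lrho_dq (nu : R) (z : C) (i j : nat) (p q : nat -> R) : C :=
  Cplus (RtoC (nu / 2 * sqrt (p i * p j) * sinh (nu / 2 * (q i - q j))))
        (Cmult z (RtoC (nu / 2 * sqrt (p i * p j) * sg q i j * cosh (nu / 2 * (q i - q j))))).

Lemma dP_Lrho nu z p q i j a : 0 < p i -> 0 < p j ->
  dP (Lrho nu z i j) a p q =
  Cplus (Cmult (RtoC (kdelta a i)) (Cmult (RtoC (/ (2 * p i))) (Lrho nu z i j p q)))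
        (Cmult (RtoC (kdelta a j)) (Cmult (RtoC (/ (2 * p j))) (Lrho nu z i j p q))).
Proof.
  intros Hi Hj. unfold dP, Lrho, Tm, Sm.
  set (c := kdelta a i * / (2 * p i) + kdelta a j * / (2 * p j)).
  pose proof (is_derive_sqrt_upd_mul p a i j Hi Hj) as Hsq.
  rewrite (DeriveC_affine z _ _ _
             (cosh (nu / 2 * (q i - q j)) * (c * sqrt (p i * p j)))
             (sg q i j * sinh (nu / 2 * (q i - q j)) * (c * sqrt (p i * p j)))).
  - unfold c. repeat rewrite ?RtoC_plus, ?RtoC_mult. ring.
  - apply (is_derive_ext (fun t => cosh (nu / 2 * (q i - q j)) * sqrt (upd p a t i * upd p a t j))).
    { intros t. apply Rmult_comm. }
    now apply is_derive_scal.
  - apply (is_derive_ext (fun t => sg q i j * sinh (nu / 2 * (q i - q j)) * sqrt (upd p a t i * upd p a t j))).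
    { intros t. rewrite Rmult_comm, <- Rmult_assoc. reflexivity. }
    now apply is_derive_scal.
Qed.

Lemma is_derive_comp_upd_sub (h : R -> R) (q : nat -> R) a i j dh :
  is_derive h (q i - q j) dh ->
  is_derive (fun t => h (upd q a t i - upd q a t j)) (q a) ((kdelta a i - kdelta a j) * dh).
Proof.
  intros Hh. apply (is_derive_comp h (fun t => upd q a t i - upd q a t j)).
  - now rewrite !upd_at.
  - apply is_derive_upd_sub.
Qed.

Lemma dQ_Lrho nu z p q i j a : (i <> j -> q i <> q j) ->
  dQ (Lrho nu z i j) a p q = Cmult (RtoC (kdelta a i - kdelta a j)) (Lrho_dq nu z i j p q).
Proof.
  intros Hq. unfold dQ, Lrho, Tm, Sm, sg.
  set (w := sqrt (p i * p j)).
  destruct (Nat.eq_dec i j) as [<-|Hij].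
  - rewrite (DeriveC_affine z _ _ _ 0 0).
    + rewrite Rminus_diag. apply injective_projections; simpl; ring.
    + apply (is_derive_ext (fun _ => w)); [intros t; now rewrite Rminus_diag, Rmult_0_r, cosh_0, Rmult_1_r|].
      apply (is_derive_const w).
    + apply (is_derive_ext (fun _ => 0)).
      { intros t. now rewrite Rminus_diag, sgn_sign, sign_0, Rmult_0_r, Rmult_0_l. }
      apply (is_derive_const 0).
  - rewrite (DeriveC_affine z _ _ _
      ((kdelta a i - kdelta a j) * (w * (nu / 2 * sinh (nu / 2 * (q i - q j)))))
      ((kdelta a i - kdelta a j) * (w * (nu / 2 * sign (q i - q j) * cosh (nu / 2 * (q i - q j)))))).
    + unfold Lrho_dq, sg. rewrite sgn_sign. fold w. repeat rewrite ?RtoC_mult, ?RtoC_minus. ring.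
    + apply (is_derive_comp_upd_sub (fun x => w * cosh (nu / 2 * x))). auto_derive; auto; ring.
    + apply (is_derive_ext
        (fun t => (fun x => w * (sign x * sinh (nu / 2 * x))) (upd q a t i - upd q a t j))).
      { intros t. cbv beta. now rewrite sgn_sign, Rmult_assoc. }
      apply (is_derive_comp_upd_sub (fun x => w * (sign x * sinh (nu / 2 * x)))).
      apply is_derive_scal, is_derive_sign_sinh.
      now apply Rminus_eq_contra, Hq.
Qed.

Lemma sumC_ext n f g : (forall a, (a < n)%nat -> f a = g a) -> sumC n f = sumC n g.
Proof.
  induction n as [|n IH]; intros H; simpl; [reflexivity|].
  rewrite IH by (intros; apply H; lia). rewrite H by lia. reflexivity.
Qed.

Lemma sumC_plus n f g : sumC n (fun a => Cplus (f a) (g a)) = Cplus (sumC n f) (sumC n g).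
Proof. induction n as [|n IH]; simpl; [ring|]. rewrite IH. ring. Qed.

Lemma sumC_0 n : sumC n (fun _ => RtoC 0) = RtoC 0.
Proof. induction n as [|n IH]; simpl; [reflexivity|]. rewrite IH. ring. Qed.

Lemma sumC_kdelta n i f : (i < n)%nat ->
  sumC n (fun a => Cmult (RtoC (kdelta a i)) (f a)) = f i.
Proof.
  induction n as [|n IH]; intros Hi; simpl; [lia|].
  unfold kdelta at 2. destruct (Nat.eq_dec n i) as [<-|Hne].
  - rewrite (sumC_ext n _ (fun _ => RtoC 0)), sumC_0; [ring|].
    intros a Ha. unfold kdelta. destruct (Nat.eq_dec a n); [lia|ring].
  - rewrite IH by lia. ring.
Qed.

Definition pb2_density (gamma nu : R) (p q : nat -> R) (XF YF XG YG : C) (a b : nat) : C :=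
  Cplus (Cplus (Cmult (Cmult XF XG) (RtoC (Bpp gamma nu p q a b)))
               (Cmult (Cmult YF XG) (RtoC (Bqp gamma nu p q a b))))
        (Cplus (Cmult (Cmult XF YG) (RtoC (- Bqp gamma nu p q b a)))
               (Cmult (Cmult YF YG) (RtoC (Bqq gamma nu q a b)))).

Lemma PB2_two_point N gamma nu F G p q i j k l XFi XFj YF XGk XGl YG :
  (i < N)%nat -> (j < N)%nat -> (k < N)%nat -> (l < N)%nat ->
  (forall a, dP F a p q = Cplus (Cmult (RtoC (kdelta a i)) XFi) (Cmult (RtoC (kdelta a j)) XFj)) ->
  (forall a, dQ F a p q = Cmult (RtoC (kdelta a i - kdelta a j)) YF) ->
  (forall b, dP G b p q = Cplus (Cmult (RtoC (kdelta b k)) XGk) (Cmult (RtoC (kdelta b l)) XGl)) ->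
  (forall b, dQ G b p q = Cmult (RtoC (kdelta b k - kdelta b l)) YG) ->
  PB2 N gamma nu F G p q =
  Cplus (Cplus (pb2_density gamma nu p q XFi YF XGk YG i k)
               (pb2_density gamma nu p q XFi YF XGl (Copp YG) i l))
        (Cplus (pb2_density gamma nu p q XFj (Copp YF) XGk YG j k)
               (pb2_density gamma nu p q XFj (Copp YF) XGl (Copp YG) j l)).
Proof.
  intros Hi Hj Hk Hl HPF HQF HPG HQG. unfold PB2.
  set (W1 := pb2_density gamma nu p q XFi YF XGk YG).
  set (W2 := pb2_density gamma nu p q XFi YF XGl (Copp YG)).
  set (W3 := pb2_density gamma nu p q XFj (Copp YF) XGk YG).
  set (W4 := pb2_density gamma nu p q XFj (Copp YF) XGl (Copp YG)).
  rewrite (sumC_ext N _ (fun a =>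
     Cplus (Cplus (Cmult (RtoC (kdelta a i)) (W1 a k)) (Cmult (RtoC (kdelta a i)) (W2 a l)))
           (Cplus (Cmult (RtoC (kdelta a j)) (W3 a k)) (Cmult (RtoC (kdelta a j)) (W4 a l))))).
  { rewrite !sumC_plus, !sumC_kdelta by assumption. reflexivity. }
  intros a _.
  rewrite (sumC_ext N _ (fun b =>
     Cplus (Cplus (Cmult (RtoC (kdelta b k)) (Cmult (RtoC (kdelta a i)) (W1 a b)))
                  (Cmult (RtoC (kdelta b l)) (Cmult (RtoC (kdelta a i)) (W2 a b))))
           (Cplus (Cmult (RtoC (kdelta b k)) (Cmult (RtoC (kdelta a j)) (W3 a b)))
                  (Cmult (RtoC (kdelta b l)) (Cmult (RtoC (kdelta a j)) (W4 a b)))))).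
  { rewrite !sumC_plus, !sumC_kdelta by assumption. reflexivity. }
  intros b _. rewrite HPF, HQF, HPG, HQG, !RtoC_minus.
  unfold W1, W2, W3, W4, pb2_density. ring.
Qed.

Lemma cosh_sub c x y : cosh (c * (x - y)) = (exp (c * x) / exp (c * y) + exp (c * y) / exp (c * x)) / 2.
Proof. unfold cosh, Rdiv. rewrite <- !exp_Ropp, <- !exp_plus. do 3 f_equal; ring. Qed.

Lemma sinh_sub c x y : sinh (c * (x - y)) = (exp (c * x) / exp (c * y) - exp (c * y) / exp (c * x)) / 2.
Proof. unfold sinh, Rdiv. rewrite <- !exp_Ropp, <- !exp_plus. do 3 f_equal; ring. Qed.

Lemma exp_sub_sqr c x y : exp (c * (x - y)) = (exp (c / 2 * x) / exp (c / 2 * y)) ^ 2.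
Proof.
  replace (c * (x - y)) with ((c / 2 * x + - (c / 2 * y)) + (c / 2 * x + - (c / 2 * y))) by field.
  rewrite !exp_plus, exp_Ropp. unfold Rdiv. ring.
Qed.

Lemma exp_abs_sg nu (q : nat -> R) a b :
  exp (nu * Rabs (q a - q b)) =
  ((1 + sg q a b) * (exp (nu / 2 * q a) / exp (nu / 2 * q b)) ^ 2
   + (1 - sg q a b) * (exp (nu / 2 * q b) / exp (nu / 2 * q a)) ^ 2) / 2.
Proof.
  destruct (Rtotal_order (q a) (q b)) as [H|[H|H]].
  - rewrite sg_lt, Rabs_left by lra.
    replace (nu * - (q a - q b)) with (nu * (q b - q a)) by ring.
    rewrite exp_sub_sqr. field; split; apply Rgt_not_eq, exp_pos.
  - rewrite (sg_eq q a b H), H, Rminus_diag, Rabs_R0, Rmult_0_r, exp_0.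
    field. apply Rgt_not_eq, exp_pos.
  - rewrite sg_gt, Rabs_right, exp_sub_sqr by lra. field; split; apply Rgt_not_eq, exp_pos.
Qed.

Lemma exp_neg_abs_sg nu (q : nat -> R) a b :
  exp (- nu * Rabs (q a - q b)) =
  ((1 + sg q a b) * (exp (nu / 2 * q b) / exp (nu / 2 * q a)) ^ 2
   + (1 - sg q a b) * (exp (nu / 2 * q a) / exp (nu / 2 * q b)) ^ 2) / 2.
Proof.
  destruct (Rtotal_order (q a) (q b)) as [H|[H|H]].
  - rewrite sg_lt, Rabs_left by lra.
    replace (- nu * - (q a - q b)) with (nu * (q a - q b)) by ring.
    rewrite exp_sub_sqr. field; split; apply Rgt_not_eq, exp_pos.
  - rewrite (sg_eq q a b H), H, Rminus_diag, Rabs_R0, Rmult_0_r, exp_0.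
    field. apply Rgt_not_eq, exp_pos.
  - rewrite sg_gt, Rabs_right by lra.
    replace (- nu * (q a - q b)) with (nu * (q b - q a)) by ring.
    rewrite exp_sub_sqr. field; split; apply Rgt_not_eq, exp_pos.
Qed.

Lemma RtoC_Rinv x : RtoC (/ x) = Cinv (RtoC x).
Proof.
  destruct (Req_dec x 0) as [->|Hx]; [|now apply RtoC_inv].
  rewrite Rinv_0. apply injective_projections; simpl; unfold Rdiv; ring.
Qed.

Lemma zplus_mul_zminus gamma : Cmult (zplus gamma) (zminus gamma) = RtoC 1.
Proof.
  unfold zplus, zminus, csqrtR. destruct (Rle_dec 0 (gamma ^ 2 - 4)) as [H|H].
  - pose proof (sqrt_sqrt _ H) as E. set (s := sqrt (gamma ^ 2 - 4)) in *.
    apply injective_projections; simpl; nra.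
  - assert (H' : 0 <= - (gamma ^ 2 - 4)) by lra.
    pose proof (sqrt_sqrt _ H') as E. set (s := sqrt (- (gamma ^ 2 - 4))) in *.
    apply injective_projections; simpl; nra.
Qed.

Lemma zplus_add_zminus gamma : Cplus (zplus gamma) (zminus gamma) = RtoC (- gamma).
Proof.
  unfold zplus, zminus. destruct (csqrtR (gamma ^ 2 - 4)) as [a b].
  apply injective_projections; simpl; field.
Qed.

Lemma RtoC_neq0 x : x <> 0 -> RtoC x <> RtoC 0.
Proof. intros Hx E. now apply Hx, RtoC_inj. Qed.

Lemma Lrho_cross_terms nu gamma zp zm (p q : nat -> R) i j k l :
  nu <> 0 -> Cmult zp zm = RtoC 1 -> Cplus zp zm = RtoC (- gamma) ->
  (forall a, In a [i; j; k; l] -> 0 < p a) ->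
  (forall a b, In a [i; j; k; l] -> In b [i; j; k; l] -> q a = q b -> a = b) ->
  let Lp a b := Lrho nu zp a b p q in
  let Lm a b := Lrho nu zm a b p q in
  Cplus (Cplus (pb2_density gamma nu p q (Cmult (RtoC (/ (2 * p i))) (Lp i j)) (Lrho_dq nu zp i j p q)
                  (Cmult (RtoC (/ (2 * p k))) (Lm k l)) (Lrho_dq nu zm k l p q) i k)
               (pb2_density gamma nu p q (Cmult (RtoC (/ (2 * p i))) (Lp i j)) (Lrho_dq nu zp i j p q)
                  (Cmult (RtoC (/ (2 * p l))) (Lm k l)) (Copp (Lrho_dq nu zm k l p q)) i l))
        (Cplus (pb2_density gamma nu p q (Cmult (RtoC (/ (2 * p j))) (Lp i j)) (Copp (Lrho_dq nu zp i j p q))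
                  (Cmult (RtoC (/ (2 * p k))) (Lm k l)) (Lrho_dq nu zm k l p q) j k)
               (pb2_density gamma nu p q (Cmult (RtoC (/ (2 * p j))) (Lp i j)) (Copp (Lrho_dq nu zp i j p q))
                  (Cmult (RtoC (/ (2 * p l))) (Lm k l)) (Copp (Lrho_dq nu zm k l p q)) j l)) =
  Cmult (RtoC (- (nu / 4)))
    (Cplus (Cplus (Cmult (RtoC (sg q i k)) (Cmult (Lp k j) (Lm i l)))
                  (Cmult (RtoC (sg q j l)) (Cmult (Lm k j) (Lp i l))))
           (Cplus (Cmult (RtoC (sg q j k)) (Cmult (Lp i k) (Lm j l)))
                  (Cmult (RtoC (sg q i l)) (Cmult (Lm k i) (Lp l j))))).
Proof.
  intros Hnu Hprod Hsum Hp Hq Lp Lm. subst Lp Lm. cbv zeta.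
  assert (Hzp : zp <> RtoC 0).
  { intros E. rewrite E, Cmult_0_l in Hprod. apply RtoC_inj in Hprod. lra. }
  assert (Ezm : zm = Cinv zp).
  { rewrite <- (Cmult_1_l zm), <- (Cinv_l zp Hzp), <- Cmult_assoc, Hprod. ring. }
  assert (Egamma : RtoC gamma = Copp (Cplus zp (Cinv zp))).
  { rewrite <- Ezm, Hsum, RtoC_opp. ring. }
  subst zm. clear Hprod Hsum.
  assert (Hp0 : forall a, In a [i; j; k; l] -> 0 <= p a) by (intros; now apply Rlt_le, Hp).
  unfold pb2_density, Bpp, Bqp, Bqq, QQ, SS, Lrho, Lrho_dq, Tm, Sm.
  rewrite ?exp_neg_abs_sg, ?exp_abs_sg, ?cosh_sub, ?sinh_sub.
  rewrite ?sqrt_mult_alt by (apply Hp0; simpl; tauto).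
  unfold Rdiv.
  repeat rewrite ?RtoC_plus, ?RtoC_minus, ?RtoC_mult, ?RtoC_opp, ?RtoC_Rinv, ?RtoC_pow.
  rewrite Egamma. clear Egamma.
  assert (Hsq : forall a, In a [i; j; k; l] ->
            RtoC (p a) = Cmult (RtoC (sqrt (p a))) (RtoC (sqrt (p a)))).
  { intros a Ha. now rewrite <- RtoC_mult, sqrt_sqrt by now apply Hp0. }
  rewrite (Hsq i), (Hsq j), (Hsq k), (Hsq l) by (simpl; tauto).
  clear Hsq Hp0.
  destruct (Nat.eq_dec i j) as [Eij|Eij]; destruct (Nat.eq_dec i k) as [Eik|Eik];
  destruct (Nat.eq_dec i l) as [Eil|Eil]; destruct (Nat.eq_dec j k) as [Ejk|Ejk];
  destruct (Nat.eq_dec j l) as [Ejl|Ejl]; destruct (Nat.eq_dec k l) as [Ekl|Ekl];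
  try (exfalso; lia); subst.
  (* The identity relies on the transitivity of the signs [sg q a b], not only on
     [sg q a b ^ 2 = 1]; hence the split over the relative order of the points. *)
  all: repeat match goal with
       | |- context [sg ?q ?a ?a] => rewrite (sg_eq q a a eq_refl)
       | |- context [sg ?q ?a ?b] =>
           let H := fresh "Hord" in
           destruct (Rtotal_order (q a) (q b)) as [H|[H|H]];
           [ rewrite (sg_lt q a b H); try rewrite (sg_gt q b a H)
           | exfalso; apply Hq in H; [lia | simpl; tauto ..]
           | rewrite (sg_gt q a b H); try rewrite (sg_lt q b a H) ]
       end.
  all: try (exfalso; lra).
  all: field; repeat split; try exact Hzp; apply RtoC_neq0.
  all: first [ apply Rgt_not_eq, exp_pos | exact Hnu
             | apply Rgt_not_eq, sqrt_lt_R0, Hp; simpl; tauto ].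
Qed.

Theorem mainTheorem9 (N : nat) (nu gamma : R) (p q : nat -> R) (i j k l : nat) :
  (2 <= N)%nat -> nu <> 0 -> gamma <> 2 -> gamma <> -2 ->
  (forall a, (a < N)%nat -> 0 < p a) ->
  (forall a b, (a < N)%nat -> (b < N)%nat -> a <> b -> q a <> q b) ->
  (i < N)%nat -> (j < N)%nat -> (k < N)%nat -> (l < N)%nat ->
  let Lp := fun a b => Lrho nu (zplus gamma) a b p q in
  let Lm := fun a b => Lrho nu (zminus gamma) a b p q in
  PB2 N gamma nu (Lrho nu (zplus gamma) i j) (Lrho nu (zminus gamma) k l) p q =
  Cmult (RtoC (- (nu / 4)))
    (Cplus (Cplus (Cmult (RtoC (sg q i k)) (Cmult (Lp k j) (Lm i l)))
                  (Cmult (RtoC (sg q j l)) (Cmult (Lm k j) (Lp i l))))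
           (Cplus (Cmult (RtoC (sg q j k)) (Cmult (Lp i k) (Lm j l)))
                  (Cmult (RtoC (sg q i l)) (Cmult (Lm k i) (Lp l j))))).
Proof.
  intros _ Hnu _ _ Hp Hq Hi Hj Hk Hl Lp Lm.
  assert (HN : forall a, In a [i; j; k; l] -> (a < N)%nat)
    by (intros a [<-|[<-|[<-|[<-|[]]]]]; assumption).
  rewrite (PB2_two_point N gamma nu _ _ p q i j k l
    (Cmult (RtoC (/ (2 * p i))) (Lp i j)) (Cmult (RtoC (/ (2 * p j))) (Lp i j))
    (Lrho_dq nu (zplus gamma) i j p q)
    (Cmult (RtoC (/ (2 * p k))) (Lm k l)) (Cmult (RtoC (/ (2 * p l))) (Lm k l))
    (Lrho_dq nu (zminus gamma) k l p q)); try assumption.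
  - apply Lrho_cross_terms; auto using zplus_mul_zminus, zplus_add_zminus.
    intros a b Ha Hb Eab. destruct (Nat.eq_dec a b) as [|Hab]; [assumption|].
    now contradict Eab; apply Hq; auto.
  - intros a. apply dP_Lrho; auto.
  - intros a. apply dQ_Lrho; auto.
  - intros b. apply dP_Lrho; auto.
  - intros b. apply dQ_Lrho; auto.
Qed.
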